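(* Let $R$ be a principal ideal domain and $I$ an ideal of $R[X]$ with $I\cap R = Rd$. If the image of $I$ in $(R/dR)[X]$ is generated by a single element which is a non-zero-divisor of $(R/dR)[X]$, then $I$ is power stable.
   Context: An ideal $I$ of the polynomial ring $R[X]$ over an integral domain $R$ is called power stable if $I^t\cap R = (I\cap R)^t$ for all integers $t\geq 1$. *)

From HB Require Import structures.
From mathcomp Require Import all_boot all_order all_algebra.
Set Implicit Arguments. Unset Strict Implicit. Unset Printing Implicit Defensive.
Import GRing.Theory.
Local Open Scope ring_scope.

Definition is_ideal (T : comRingType) (I : T -> Prop) : Prop :=
  I 0 /\ (forall x y, I x -> I y -> I (x + y)) /\ (forall a x, I x -> I (a * x)).

Definition is_PID (R : idomainType) : Prop :=
  forall J : R -> Prop, is_ideal J ->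
    exists a : R, forall x, J x <-> exists c : R, x = c * a.

Inductive gen_ideal (T : comRingType) (S : T -> Prop) : T -> Prop :=
| gi_in x : S x -> gen_ideal S x
| gi_zero : gen_ideal S 0
| gi_add x y : gen_ideal S x -> gen_ideal S y -> gen_ideal S (x + y)
| gi_mul a x : gen_ideal S x -> gen_ideal S (a * x).

Definition ideal_mul (T : comRingType) (I J : T -> Prop) : T -> Prop :=
  gen_ideal (fun z => exists a b, I a /\ J b /\ z = a * b).

Fixpoint ideal_pow (T : comRingType) (I : T -> Prop) (t : nat) : T -> Prop :=
  match t with
  | O => fun _ => True
  | S t' => ideal_mul (ideal_pow I t') I
  end.

Definition contract (R : comRingType) (I : {poly R} -> Prop) : R -> Prop :=
  fun c => I c%:P.

Definition power_stable (R : comRingType) (I : {poly R} -> Prop) : Prop :=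
  forall t : nat, (1 <= t)%N ->
    forall c : R, contract (ideal_pow I t) c <-> ideal_pow (contract I) t c.

(* Congruence modulo d R[X], i.e. equality of images in (R/dR)[X]
   (the kernel of R[X] -> (R/dR)[X] is exactly d R[X]). *)
Definition cong_mod (R : comRingType) (d : R) (p q : {poly R}) : Prop :=
  exists r : {poly R}, p - q = d%:P * r.

From HB Require Import structures.
From mathcomp Require Import all_boot all_order all_algebra.
From mathcomp Require Import ring.
Set Implicit Arguments. Unset Strict Implicit.
Import GRing.Theory.
Local Open Scope ring_scope.

(* Write [d] also for the constant polynomial.  From the
   hypotheses we extract [g] in [I] whose image generates the image of [I]
   in (R/dR)[X] and is a non-zero-divisor there: every [y] in [I] splits as
   [y = g h + d r] with [d r] in [I], and [d | g q] forces [d | q].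
   We then introduce the ideals
       F_0 = R[X],   F_(t+1) = d^(t+1) (I : d) + g F_t,
   (the predicate [filt] below) and show
   - I^t is contained in F_t (F_t is an ideal and F_t * I is in F_(t+1));
   - F_(t+1) is contained in I, and for d <> 0, d P in F_(t+1) forces
     P in F_t (this is where the non-zero-divisor property of g is used);
   - hence a constant of F_t is divisible by d^t, by induction on t using
     [I /\ R = Rd].
   So (I^t) /\ R is contained in d^t R = (I /\ R)^t; the converse inclusion
   holds for any ideal. *)

Lemma gen_ideal_min (T : comNzRingType) (S P : T -> Prop) :
  is_ideal P -> (forall x, S x -> P x) -> forall x, gen_ideal S x -> P x.
Proof.
move=> [P0 [PD PM]] SP x; elim=> [y /SP // | // | y z _ Py _ Pz | a y _ Py].
- exact: PD.
- exact: PM.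
Qed.

Lemma ideal_pow_exp {T : comNzRingType} {J : T -> Prop} {d : T} :
  J d -> forall t e, ideal_pow J t (e * d ^+ t).
Proof.
move=> Jd; elim=> [|t IH] e //=.
apply: gi_in; exists (e * d ^+ t), d; split; first exact: IH.
by rewrite exprSr mulrA.
Qed.

Lemma ideal_pow_principal {T : comNzRingType} {J : T -> Prop} {d : T} :
  (forall x, J x <-> exists e, x = e * d) ->
  forall t x, ideal_pow J t x <-> exists e, x = e * d ^+ t.
Proof.
move=> hJ t x; split; last first.
  by move=> [e ->]; apply: ideal_pow_exp; apply/hJ; exists 1; rewrite mul1r.
elim: t x => [|t IH] x /=; first by exists x; rewrite expr0 mulr1.
apply: (@gen_ideal_min _ _ (fun x => exists e, x = e * d ^+ t.+1)).
- split; first by exists 0; rewrite mul0r.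
  split; first by move=> y z [e1 ->] [e2 ->]; exists (e1 + e2); rewrite mulrDl.
  by move=> a y [e ->]; exists (a * e); rewrite mulrA.
- move=> z [a [b [/IH [e1 ->] [/hJ [e2 ->] ->]]]].
  by exists (e1 * e2); rewrite exprSr mulrACA.
Qed.

Section Filtration.

Variables (R : idomainType) (I : {poly R} -> Prop) (d : R) (g : {poly R}).
Hypothesis hI : is_ideal I.
Hypothesis hg : I g.

Fixpoint filt (t : nat) (p : {poly R}) : Prop :=
  match t with
  | O => True
  | S t' => exists a q, I (d%:P * a) /\ filt t' q /\
            p = d%:P ^+ t'.+1 * a + g * q
  end.

Lemma filt_ideal t : is_ideal (filt t).
Proof.
case: hI => [I0 [ID IM]].
elim: t => [|t [F0 [FD FM]]] //=; split; [|split].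
- by exists 0, 0; rewrite mulr0; split => //; rewrite !mulr0 addr0.
- move=> x y [a [q [Ia [Fq ->]]]] [a' [q' [Ia' [Fq' ->]]]].
  exists (a + a'), (q + q'); rewrite mulrDr; split; first exact: ID.
  by split; [exact: FD | ring].
- move=> h x [a [q [Ia [Fq ->]]]].
  exists (h * a), (h * q); split; first by rewrite mulrCA; exact: IM.
  by split; [exact: FM | ring].
Qed.

Lemma filt_lead t a : I (d%:P * a) -> filt t.+1 (d%:P ^+ t.+1 * a).
Proof.
have [F0 _] := filt_ideal t.
by move=> Ia; exists a, 0; rewrite mulr0 addr0.
Qed.

Lemma filt_sub_I {t p} : filt t.+1 p -> I p.
Proof.
case: hI => [_ [ID IM]] [a [q [Ia [_ ->]]]].
apply: ID; last by rewrite mulrC; exact: IM.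
by rewrite exprSr -mulrA; exact: IM.
Qed.

Hypothesis hdec :
  forall {y}, I y -> exists h r, I (d%:P * r) /\ y = g * h + d%:P * r.

Lemma filt_mul t x y : filt t x -> I y -> filt t.+1 (x * y).
Proof.
case: hI => [_ [_ IM]] Fx Iy; have [h [r [Ir Ey]]] := hdec Iy.
elim: t x Fx => [|t IH] x Fx; rewrite [in x * y]Ey.
  exists (x * r), (x * h); split; first by rewrite mulrCA; exact: IM.
  by split => //; ring.
case: Fx => [a [q [Ia [Fq ->]]]].
have [_ [FD _]] := filt_ideal t.+1.
exists (a * r), (q * y + d%:P ^+ t.+1 * (a * h)); split.
  by rewrite mulrCA; exact: IM.
split; last by rewrite Ey !exprS; ring.
apply: FD; first exact: IH.
by apply: filt_lead; rewrite mulrA [_ * a * h]mulrC; exact: IM.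
Qed.

Lemma ideal_pow_sub_filt t p : ideal_pow I t p -> filt t p.
Proof.
elim: t p => [|t IH] p //=.
apply: (@gen_ideal_min _ _ (filt t.+1)); first exact: filt_ideal.
by move=> z [a [b [/IH Fa [Ib ->]]]]; exact: filt_mul.
Qed.

Hypothesis hnzd : forall q, cong_mod d (g * q) 0 -> cong_mod d q 0.

Lemma filt_div t P : d != 0 -> filt t.+1 (d%:P * P) -> filt t P.
Proof.
move=> hd; have hd' : d%:P != 0 by rewrite polyC_eq0.
elim: t P => [|t IH] P // [a [q [Ia [Fq EP]]]].
have [Q EQ] : cong_mod d q 0.
  apply: hnzd; exists (P - d%:P ^+ t.+1 * a).
  by rewrite subr0 mulrBr EP exprS; ring.
rewrite subr0 in EQ.
exists a, Q; split => //; split; first by apply: IH; rewrite -EQ.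
by apply: (mulfI hd'); rewrite EP EQ exprS; ring.
Qed.

Hypothesis hId : forall c : R, contract I c <-> exists e : R, c = e * d.

(* The constants of F_t are multiples of d^t: a constant c of F_(t+1) lies in
   I, so c = e d, and then e lies in F_t by [filt_div]. *)
Lemma filt_const t c : filt t c%:P -> exists e, c = e * d ^+ t.
Proof.
elim: t c => [|t IH] c Fc; first by exists c; rewrite expr0 mulr1.
have [e Ec] := (hId c).1 (filt_sub_I Fc).
have [d0|hd] := eqVneq d 0; first by exists 0; rewrite Ec d0 mulr0 mul0r.
have [e' Ee] : exists e', e = e' * d ^+ t.
  by apply: IH; apply: filt_div => //; rewrite -polyCM mulrC -Ec.
by exists e'; rewrite Ec Ee exprSr mulrA.
Qed.

End Filtration.

(* Replacing the generator [f] by a congruent element [g] of [I] preserves the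
   non-zero-divisor property modulo [d]. *)
Lemma cong_nzd {R : comNzRingType} {d : R} {f g : {poly R}} :
  cong_mod d f g ->
  (forall h, cong_mod d (h * f) 0 -> cong_mod d h 0) ->
  forall q, cong_mod d (g * q) 0 -> cong_mod d q 0.
Proof.
move=> [s Es] hf q [u Eu]; apply: hf; exists (u + q * s).
rewrite subr0 in Eu; rewrite subr0 mulrDr -Eu mulrCA -Es; ring.
Qed.

Lemma cong_dec {R : comNzRingType} {I : {poly R} -> Prop} {d : R} {f g : {poly R}} :
  is_ideal I -> I g -> cong_mod d f g ->
  (forall y, I y -> exists h, cong_mod d y (h * f)) ->
  forall y, I y -> exists h r, I (d%:P * r) /\ y = g * h + d%:P * r.
Proof.
move=> [_ [ID IM]] Ig [s Es] hf y Iy; have [h [r Er]] := hf y Iy.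
have E : d%:P * (h * s + r) = y - g * h.
  by rewrite mulrDr mulrCA -Es -Er; ring.
exists h, (h * s + r); split; last by rewrite E; ring.
by rewrite E; apply: ID => //; rewrite -mulrN mulrC; exact: IM.
Qed.

Theorem theorem3p3 (R : idomainType) (hPID : is_PID R)
  (I : {poly R} -> Prop) (hI : is_ideal I) (d : R)
  (hId : forall c : R, contract I c <-> exists e : R, c = e * d)
  (hgen : exists f : {poly R},
      (* the image of f lies in the image of I *)
      (exists g, I g /\ cong_mod d f g) /\
      (* the image of I is contained in the ideal generated by the image of f *)
      (forall g, I g -> exists h, cong_mod d g (h * f)) /\
      (* the image of f is a non-zero-divisor of (R/dR)[X] *)
      (forall h, cong_mod d (h * f) 0 -> cong_mod d h 0)) :
  power_stable I.
Proof.
case: hgen => f [[g [Ig fg]] [hgenf hnzdf]].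
have hdec := cong_dec hI Ig fg hgenf.
have hnzd := cong_nzd fg hnzdf.
move=> t _ c; rewrite (ideal_pow_principal hId); split.
- move=> /(ideal_pow_sub_filt hI hdec).
  exact: filt_const hI Ig hnzd hId t c.
- move=> [e ->]; rewrite /contract polyCM rmorphXn.
  by apply: ideal_pow_exp; apply/hId; exists 1; rewrite mul1r.
Qed.
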